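(* Let $f=(f_1,\dots,f_P)^\top:\mathbb{R}^N\to\mathbb{R}^P$ and $g=(g_1,\dots,g_M)^\top:\mathbb{R}^N\to\mathbb{R}^M$ satisfy: each $f_i$ is strictly convex and continuously differentiable; each $g_j$ is convex and continuously differentiable; the problem $\min\{f(x)\mid x\in\mathbb{X}\}$ with $\mathbb{X}:=\{x\mid g_j(x)\le 0,\ j=1,\dots,M\}$ is bounded; and Slater's condition holds. Let $\mathcal{P}$ be its upper image. Let $\tilde{\mathcal{P}}\subseteq\mathbb{R}^P$ be a closed and convex upper set and let $\epsilon:\mathcal{W}\to\mathbb{R}_+$ be constant, $\epsilon(w)\equiv\epsilon_0>0$. Then $\tilde{\mathcal{P}}$ is an $\epsilon(\cdot)$-inner approximation of $\mathcal{P}$ if and only if $\tilde{\mathcal{P}}\subseteq\mathcal{P}\subseteq\tilde{\mathcal{P}}-\epsilon_0\mathbf{1}$.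
   Context: $\mathcal{W}:=\{w\in\mathbb{R}^P_+\mid\mathbf{1}^\top w=1\}$, $\mathbf{1}=(1,\dots,1)^\top\in\mathbb{R}^P$. Bounded: there is $y$ with $f(x)\in y+\mathbb{R}^P_+$ for all $x\in\mathbb{X}$. Slater's condition: some $\bar x$ has $g_j(\bar x)<0$ for all $j$. A weak minimizer is $x^*\in\mathbb{X}$ with no $x\in\mathbb{X}$ satisfying $f(x^* )-f(x)\in\mathbb{R}^P_{++}$; with $\mathcal{X}$ the set of weak minimizers, the upper image is $\mathcal{P}:=\operatorname{cl}(f[\mathcal{X}]+\mathbb{R}^P_+)$. An upper set is a set $A$ with $A+\mathbb{R}^P_+= A$. For $w\in\mathcal{W}$ let $G(w):=\{y\in\mathbb{R}^P\mid w^\top y\ge 0\}$. Given $\epsilon:\mathcal{W}\to\mathbb{R}_+$, a set $\tilde{\mathcal{P}}\subseteq\mathbb{R}^P$ is an $\epsilon(\cdot)$-inner approximation (of $\mathcal{P}$) if $\tilde{\mathcal{P}}\subseteq\mathcal{P}\subseteq\bigcap_{w\in\mathcal{W}}\operatorname{cl}\left[\tilde{\mathcal{P}}-\epsilon(w)\mathbf{1}+G(w)\right]$. *)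

From HB Require Import structures.
From mathcomp Require Import all_boot all_order all_algebra.
From mathcomp Require Import all_classical all_reals all_analysis.
Set Implicit Arguments. Unset Strict Implicit. Unset Printing Implicit Defensive.
Import Order.TTheory GRing.Theory Num.Theory.
Import numFieldNormedType.Exports.
Local Open Scope classical_set_scope.
Local Open Scope ring_scope.

Section Defs.
Variable R : realType.

Definition convex_fun (N : nat) (h : 'rV[R]_N -> R) : Prop :=
  forall (x y : 'rV[R]_N) (t : R), 0 <= t <= 1 ->
    h (t *: x + (1 - t) *: y) <= t * h x + (1 - t) * h y.

Definition strictly_convex_fun (N : nat) (h : 'rV[R]_N -> R) : Prop :=
  forall (x y : 'rV[R]_N) (t : R), x != y -> 0 < t < 1 ->
    h (t *: x + (1 - t) *: y) < t * h x + (1 - t) * h y.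

(* continuously differentiable on all of R^N: differentiable everywhere and
   the derivative x |-> 'd h x is continuous (tested on every direction v;
   in finite dimension this is continuity in operator norm) *)
Definition C1_fun (N : nat) (h : 'rV[R]_N -> R) : Prop :=
  (forall x, differentiable h x) /\
  (forall v : 'rV[R]_N, continuous (fun x => ('d h x : 'rV[R]_N -> R) v)).

Definition feasible (N M : nat) (g : 'I_M -> 'rV[R]_N -> R) : set 'rV[R]_N :=
  [set x | forall j, g j x <= 0].

Definition fvec (N P : nat) (f : 'I_P -> 'rV[R]_N -> R) (x : 'rV[R]_N)
  : 'rV[R]_P := \row_i f i x.

Definition orthant (P : nat) : set 'rV[R]_P := [set r | forall i, 0 <= r ord0 i].

Definition bounded_problem (N M P : nat) (f : 'I_P -> 'rV[R]_N -> R)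
    (g : 'I_M -> 'rV[R]_N -> R) : Prop :=
  exists (y : 'rV[R]_P), forall x, feasible g x -> orthant (fvec f x - y).

Definition slater (N M : nat) (g : 'I_M -> 'rV[R]_N -> R) : Prop :=
  exists (xb : 'rV[R]_N), forall j, g j xb < 0.

Definition weak_minimizer (N M P : nat) (f : 'I_P -> 'rV[R]_N -> R)
    (g : 'I_M -> 'rV[R]_N -> R) (xs : 'rV[R]_N) : Prop :=
  feasible g xs /\
  ~ (exists x, feasible g x /\ forall i, 0 < (fvec f xs - fvec f x) ord0 i).

Definition msum (P : nat) (A B : set 'rV[R]_P) : set 'rV[R]_P :=
  [set z | exists a, A a /\ exists b, B b /\ z = a + b].

Definition upper_image (N M P : nat) (f : 'I_P -> 'rV[R]_N -> R)
    (g : 'I_M -> 'rV[R]_N -> R) : set 'rV[R]_P :=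
  closure (msum (fvec f @` weak_minimizer f g) (@orthant P)).

Definition upper_set (P : nat) (A : set 'rV[R]_P) : Prop :=
  msum A (@orthant P) = A.

Definition cvx_set (P : nat) (A : set 'rV[R]_P) : Prop :=
  forall x y t, A x -> A y -> 0 <= t <= 1 -> A (t *: x + (1 - t) *: y).

Definition Wset (P : nat) : set 'rV[R]_P :=
  [set w | orthant w /\ \sum_i w ord0 i = 1].

Definition Ghalf (P : nat) (w : 'rV[R]_P) : set 'rV[R]_P :=
  [set y | 0 <= \sum_i w ord0 i * y ord0 i].

Definition ones (P : nat) : 'rV[R]_P := const_mx 1.

Definition shift_ones (P : nat) (A : set 'rV[R]_P) (c : R) : set 'rV[R]_P :=
  [set a - c *: ones P | a in A].

Definition inner_approx (P : nat) (Pt Pu : set 'rV[R]_P)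
    (eps : 'rV[R]_P -> R) : Prop :=
  Pt `<=` Pu /\
  Pu `<=` \bigcap_(w in @Wset P) closure (msum (shift_ones Pt (eps w)) (Ghalf w)).

End Defs.

From Pilot Require Import Defs.
From HB Require Import structures.
From mathcomp Require Import all_boot all_order all_algebra.
From mathcomp Require Import all_classical all_reals all_analysis.
From mathcomp Require Import ring lra.
Import Order.TTheory GRing.Theory Num.Theory.
Import numFieldNormedType.Exports.
Local Open Scope classical_set_scope.
Local Open Scope ring_scope.
Set Implicit Arguments. Unset Strict Implicit.

(* The inclusion Pt - eps0 1 ⊆ cl(Pt - eps0 1 + G(w)) holds because 0 ∈ G(w),
   so only the converse needs work, and it is a separation argument.  If y
   lies in every cl(Pt - eps0 1 + G(w)) but z := y + eps0 1 is not in Pt, let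
   c be the point of Pt nearest to z.  Since Pt is convex, Pt lies in the
   halfspace <c - z, a - c> >= 0; since Pt is an upper set, c - z is a
   nonnegative nonzero vector, which normalises to a weight w.  The closed
   halfspace {p | <w, c> - eps0 <= <w, p>} then contains Pt - eps0 1 + G(w),
   hence its closure, but not y. *)

Section UpperSetSeparation.
Variables (R : realType) (P : nat).
Implicit Types (w x y z a c : 'rV[R]_P) (A : set 'rV[R]_P).

Definition wdot w x : R := \sum_i w ord0 i * x ord0 i.

Lemma wdotD w x y : wdot w (x + y) = wdot w x + wdot w y.
Proof.
by rewrite /wdot -big_split; apply: eq_bigr => i _; rewrite mxE mulrDr.
Qed.

Lemma wdotB w x y : wdot w (x - y) = wdot w x - wdot w y.
Proof. by rewrite /wdot -sumrB; apply: eq_bigr => i _; rewrite !mxE mulrBr. Qed.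

Lemma wdotZl (k : R) w x : wdot (k *: w) x = k * wdot w x.
Proof.
by rewrite /wdot mulr_sumr; apply: eq_bigr => i _; rewrite mxE mulrA.
Qed.

Lemma wdot_delta w i : wdot w (delta_mx 0 i) = w ord0 i.
Proof.
rewrite /wdot (bigD1 i) //= big1 => [|j /negbTE ji]; rewrite mxE eqxx.
  by rewrite mulr1 addr0.
by rewrite ji mulr0.
Qed.

Lemma wdot_ones_Wset w (e : R) : Wset w -> wdot w (e *: ones R P) = e.
Proof.
move=> [_ w1]; rewrite /wdot -[RHS]mulr1 -w1 mulr_sumr.
by apply: eq_bigr => i _; rewrite !mxE mulr1 mulrC.
Qed.

Lemma continuous_wdot w : continuous (wdot w).
Proof.
apply: continuous_big => [|i _ x]; first exact: add_continuous.
by apply: continuousM; [exact: cst_continuous | exact: coord_continuous].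
Qed.

Lemma closed_wdot_ge w (b : R) : closed [set p | b <= wdot w p].
Proof.
have := @preimage_closed _ _ (wdot w) _ _ (@closed_ge _ b); apply => p _.
exact: continuous_wdot.
Qed.

Lemma Wset_delta i : Wset (delta_mx 0 i : 'rV[R]_P).
Proof.
split=> [j|]; first by rewrite mxE ler0n.
have := wdot_delta (const_mx 1) i; rewrite mxE /wdot => <-.
by apply: eq_bigr => j _; rewrite !mxE mul1r.
Qed.

Lemma Wset_normalize w : (forall i, 0 <= w ord0 i) -> 0 < \sum_i w ord0 i ->
  Wset ((\sum_i w ord0 i)^-1 *: w).
Proof.
move=> w_ge0 sw_gt0; split=> [i|].
  by rewrite mxE mulr_ge0 ?invr_ge0 ?w_ge0 ?ltW.
by under eq_bigr do rewrite mxE; rewrite -mulr_sumr mulVf ?gt_eqF.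
Qed.

(* [Defs.] is needed: MathComp-Analysis also has an [msum] (of measures). *)
Lemma sub_closure_msum_Ghalf A w : A `<=` closure (Defs.msum A (Ghalf w)).
Proof.
move=> a Aa; apply: subset_closure; exists a; split => //; exists 0.
by split; [rewrite /Ghalf /= big1 // => i _; rewrite mxE mulr0 | rewrite addr0].
Qed.

Lemma closure_msum_shift_Ghalf_sub A (e b : R) w : Wset w ->
  (forall a, A a -> b <= wdot w a) ->
  closure (Defs.msum (shift_ones A e) (Ghalf w))
    `<=` [set p | b - e <= wdot w p].
Proof.
move=> Ww Ab; rewrite [X in _ `<=` X](closure_id _).1; last first.
  exact: closed_wdot_ge.
apply: closureS => _ [_ [[a Aa <-] [q [Gq ->]]]] /=.
have := Ab a Aa; have : 0 <= wdot w q := Gq.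
by rewrite wdotD wdotB wdot_ones_Wset //; lra.
Qed.

Definition sqdist z a : R := \sum_i (a ord0 i - z ord0 i) ^+ 2.

Lemma sqdist_ge0 z a : 0 <= sqdist z a.
Proof. by apply: sumr_ge0 => i _; exact: sqr_ge0. Qed.

Lemma sqdist_eq0 z a : sqdist z a = 0 -> a = z.
Proof.
move=> /psumr_eq0P a_z; apply/rowP => j; apply/eqP; rewrite -subr_eq0 -sqrf_eq0.
by apply/eqP; apply: a_z => // i _; exact: sqr_ge0.
Qed.

Lemma wdot_sqdist z a : wdot (a - z) (a - z) = sqdist z a.
Proof. by apply: eq_bigr => i _; rewrite !mxE. Qed.

Lemma continuous_sqdist z : continuous (sqdist z).
Proof.
apply: continuous_big => [|i _ a]; first exact: add_continuous.
have coord_z : {for a, continuous (fun b : 'rV[R]_P => b ord0 i - z ord0 i)}.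
  by apply: continuousB; [exact: coord_continuous | exact: cst_continuous].
exact: (continuousM coord_z coord_z).
Qed.

Lemma compact_sqdist_le z (r : R) : compact [set a | sqdist z a <= r].
Proof.
have box_cpt := @rV_compact _ P
  (fun i => `[z ord0 i - (r + 1), z ord0 i + (r + 1)]%classic)
  (fun i => @segment_compact _ _ _).
apply: (subclosed_compact _ box_cpt).
  have := @preimage_closed _ _ (sqdist z) _ _ (@closed_le _ r); apply => a _.
  exact: continuous_sqdist.
move=> a /= a_r i; rewrite in_itv /=.
have d_r : (a ord0 i - z ord0 i) ^+ 2 <= r.
  apply: le_trans a_r; rewrite /sqdist (bigD1 i) //= lerDl.
  by apply: sumr_ge0 => j _; exact: sqr_ge0.
move: d_r; set d := a ord0 i - z ord0 i => d_r.
have d_ge : - (r + 1) <= d by nra.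
have d_le : d <= r + 1 by nra.
by rewrite /d in d_ge d_le; apply/andP; split; lra.
Qed.

Lemma closed_sqdist_min A z a0 : closed A -> A a0 ->
  exists2 c, A c & forall a, A a -> sqdist z c <= sqdist z a.
Proof.
move=> Acl Aa0; pose S := A `&` [set a | sqdist z a <= sqdist z a0].
have S_cpt : compact S.
  apply: (subclosed_compact _ (@compact_sqdist_le z (sqdist z a0))).
    apply: closedI => //.
    have := @preimage_closed _ _ (sqdist z) _ _ (@closed_le _ (sqdist z a0)).
    by apply => a _; exact: continuous_sqdist.
  by move=> a [].
have S0 : S !=set0 by exists a0; split => //=.
have [c /set_mem[Ac c_a0] c_min] :=
  EVT_min_rV S0 S_cpt (continuous_subspaceT (@continuous_sqdist z)).
exists c => // a Aa; have [a_a0|/ltW] := leP (sqdist z a) (sqdist z a0).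
  by apply: c_min; rewrite inE.
exact: le_trans.
Qed.

Lemma sqdist_convex_comb z a c (t : R) : sqdist z (t *: a + (1 - t) *: c) =
  sqdist z c + 2 * t * wdot (c - z) (a - c) + t ^+ 2 * sqdist c a.
Proof.
rewrite /sqdist /wdot !mulr_sumr -!big_split /=.
by apply: eq_bigr => i _; rewrite !mxE; ring.
Qed.

Lemma nearest_point_variational A z c : cvx_set A -> A c ->
  (forall a, A a -> sqdist z c <= sqdist z a) ->
  forall a, A a -> 0 <= wdot (c - z) (a - c).
Proof.
move=> Acvx Ac c_min a Aa; rewrite leNgt; apply/negP => d_lt0.
set d := wdot _ _ in d_lt0; set Q := sqdist c a.
have Q_ge0 : 0 <= Q := sqdist_ge0 c a.
(* This t lies in (0, 1) and makes 2 d + t Q = d (1 + 2 t) negative. *)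
pose t := - d / (Q - 2 * d).
have Qd_gt0 : 0 < Q - 2 * d by lra.
have t_gt0 : 0 < t by rewrite divr_gt0 // oppr_gt0.
have t_lt1 : t < 1 by rewrite ltr_pdivrMr // mul1r; lra.
have tQ : t ^+ 2 * Q = t * (2 * t * d - d).
  have := divfK (lt0r_neq0 Qd_gt0) (- d); rewrite -/t mulrBr => tQd.
  by rewrite expr2 -mulrA; congr (t * _); lra.
have td_lt0 : t * d < 0 by nra.
have t01 : 0 <= t <= 1 by rewrite !ltW.
have := c_min _ (Acvx _ _ t Aa Ac t01).
by rewrite sqdist_convex_comb -/d -/Q tQ; nra.
Qed.

Lemma nearest_point_dir_ge0 A z c : upper_set A -> A c ->
  (forall a, A a -> 0 <= wdot (c - z) (a - c)) -> forall i, 0 <= (c - z) ord0 i.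
Proof.
move=> Aup Ac c_var i; have Aci : A (c + delta_mx 0 i).
  rewrite -Aup; exists c; split => //; exists (delta_mx 0 i).
  by split => // j; rewrite mxE ler0n.
by have := c_var _ Aci; rewrite (addrC c (delta_mx 0 i)) addrK wdot_delta.
Qed.

Lemma upper_convex_separation A z : closed A -> cvx_set A -> upper_set A ->
  A !=set0 -> ~ A z ->
  exists2 w, Wset w & exists2 b, wdot w z < b & forall a, A a -> b <= wdot w a.
Proof.
move=> Acl Acvx Aup [a0 Aa0] Anz.
have [c Ac c_min] := closed_sqdist_min z Acl Aa0.
have c_var := nearest_point_variational Acvx Ac c_min.
have v_ge0 := nearest_point_dir_ge0 Aup Ac c_var.
have cz_gt0 : 0 < sqdist z c.
  rewrite lt_def sqdist_ge0 andbT; apply/eqP => /sqdist_eq0 c_z.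
  by apply: Anz; rewrite -c_z.
set v := c - z in c_var v_ge0; set s := \sum_i v ord0 i.
have s_gt0 : 0 < s.
  rewrite lt_def sumr_ge0 // andbT; apply/eqP => /psumr_eq0P v0.
  move: cz_gt0; rewrite -wdot_sqdist /wdot big1 ?ltxx // => i _.
  by rewrite /v v0 ?mul0r.
exists (s^-1 *: v); first exact: Wset_normalize.
exists (wdot (s^-1 *: v) c) => [|a Aa].
  by rewrite -subr_gt0 -wdotB wdotZl mulr_gt0 ?invr_gt0 // wdot_sqdist.
rewrite -subr_ge0 -wdotB wdotZl.
by apply: mulr_ge0; [rewrite invr_ge0 ltW | exact: c_var].
Qed.

Lemma bigcap_closure_shift_Ghalf A (e : R) : (0 < P)%N ->
  closed A -> cvx_set A -> upper_set A ->
  \bigcap_(w in @Wset R P) closure (Defs.msum (shift_ones A e) (Ghalf w))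
    `<=` shift_ones A e.
Proof.
move=> P_gt0 Acl Acvx Aup y y_cap.
have [A0|A_empty] := pselect (A !=set0); last first.
  have [_ [[_ [[a Aa _] _]] _]] :=
    y_cap _ (Wset_delta (Ordinal P_gt0)) setT filterT.
  by case: A_empty; exists a.
pose z := y + e *: ones R P.
have [Az|nAz] := pselect (A z); first by exists z; rewrite // addrK.
have [w Ww [b zb Ab]] := upper_convex_separation Acl Acvx Aup A0 nAz.
have := closure_msum_shift_Ghalf_sub Ww Ab (y_cap w Ww).
by move: zb; rewrite /= wdotD wdot_ones_Wset //; lra.
Qed.

End UpperSetSeparation.

(* With no objectives, f(x* ) - f(x) ∈ R^0_++ holds vacuously, so no point is
   a weak minimizer. *)
Lemma upper_image_dim_gt0 (R : realType) (N M P : nat)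
  (f : 'I_P -> 'rV[R]_N -> R) (g : 'I_M -> 'rV[R]_N -> R) (y : 'rV[R]_P) :
  upper_image f g y -> (0 < P)%N.
Proof.
move=> /(_ setT filterT) [_ [[_ [[xs [xs_feas xs_min] _] _]] _]].
rewrite lt0n; apply/negP => /eqP P0; apply: xs_min; exists xs; split => // i.
by have := leq_trans (ltn_ord i) (eq_leq P0); rewrite ltn0.
Qed.

Theorem proposition4p3 (R : realType) (N M P : nat)
  (f : 'I_P -> 'rV[R]_N -> R) (g : 'I_M -> 'rV[R]_N -> R)
  (hf_sc : forall i, strictly_convex_fun (f i))
  (hf_C1 : forall i, C1_fun (f i))
  (hg_c : forall j, convex_fun (g j))
  (hg_C1 : forall j, C1_fun (g j))
  (hbd : bounded_problem f g)
  (hsl : slater g)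
  (Pt : set 'rV[R]_P)
  (hPt_closed : closed Pt) (hPt_convex : cvx_set Pt) (hPt_upper : upper_set Pt)
  (eps0 : R) (heps0 : 0 < eps0) :
  inner_approx Pt (upper_image f g) (fun _ => eps0) <->
  (Pt `<=` upper_image f g /\ upper_image f g `<=` shift_ones Pt eps0).
Proof.
split=> -[Pt_sub sub_Pt]; split=> // y y_up.
  exact: bigcap_closure_shift_Ghalf (upper_image_dim_gt0 y_up)
    hPt_closed hPt_convex hPt_upper _ (sub_Pt _ y_up).
by move=> w _; apply: sub_closure_msum_Ghalf; exact: sub_Pt.
Qed.
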